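(* Consider the following setting. Let $P\subseteq\mathbb{R}^n$ be a closed convex set, $c:\mathbb{R}^n\to\mathbb{R}$, $A\in\mathbb{R}^{I\times n}$ with rows $A_{i\bullet}$, $\eta\in\mathbb{R}^I$, scalars $\psi_{ij}$ ($i=0,\dots,I$, $j=1,\dots,J_i$) with $\psi_{ij}^\pm=\max(\pm\psi_{ij},0)$, and for each $(i,j)$ $$\phi_{ij}(x) = \max_{1\le k\le K_{ij}}\big[(a_{ij}^k)^\top x + \alpha_{ij}^k\big] + \min_{1\le \ell\le L_{ij}}\big[(b_{ij}^\ell)^\top x + \beta_{ij}^\ell\big].$$ Define $\theta$, $X_{\rm AHS}$, $\theta^\varepsilon$, $X^\varepsilon_{\rm AHS}$ as in the context. Let $\bar x\in X_{\rm AHS}$, and let $\bar\varepsilon>0$ and a neighborhood $\mathcal{N}$ of $\bar x$ be such that for all $i=0,1,\dots,I$, all $j\notin \mathcal{J}^-_{i,0}(\bar x)$, all $\varepsilon\in(0,\bar\varepsilon]$ and all $x\in\mathcal{N}$, $$\psi_{ij}^-\,\mathbf{1}_{(-\varepsilon,\infty)}(\phi_{ij}(x)) = \psi_{ij}^-\,\mathbf{1}_{[0,\infty)}(\phi_{ij}(x)) = \psi_{ij}^-\,\mathbf{1}_{[0,\infty)}(\phi_{ij}(\bar x)).$$ Then: (A) If $\bar x$ is a local maximizer of $\theta$ on $X_{\rm AHS}$, then $\bar x$ is a local maximizer of $\theta^\varepsilon$ on $X^\varepsilon_{\rm AHS}$ for every $\varepsilon\in(0,\bar\varepsilon]$. (B)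 Conversely, if for some $\varepsilon\in(0,\bar\varepsilon]$ the point $\bar x$ is a local maximizer of $\theta^\varepsilon$ on $X^\varepsilon_{\rm AHS}$ and $\bar x$ satisfies the local sign-invariance condition, then $\bar x$ is a local maximizer of $\theta$ on $X_{\rm AHS}$.
   Context: $\mathbf{1}_S$ is the indicator of $S\subseteq\mathbb{R}$. $\theta(x)=c(x)+\sum_{j=1}^{J_0}\psi_{0j}\mathbf{1}_{[0,\infty)}(\phi_{0j}(x))$ and $X_{\rm AHS}=\{x\in P: A_{i\bullet}x+\sum_{j=1}^{J_i}\psi_{ij}\mathbf{1}_{[0,\infty)}(\phi_{ij}(x))\ge\eta_i,\ i=1,\dots,I\}$ (the problem of maximizing $\theta$ over $X_{\rm AHS}$ is the A-HSCOP). For $\varepsilon>0$: $\theta^\varepsilon(x)=c(x)+\sum_{j=1}^{J_0}\psi_{0j}^+\mathbf{1}_{[0,\infty)}(\phi_{0j}(x))-\sum_{j=1}^{J_0}\psi_{0j}^-\mathbf{1}_{(-\varepsilon,\infty)}(\phi_{0j}(x))$ and $X^\varepsilon_{\rm AHS}=\{x\in P: A_{i\bullet}x+\sum_{j}\psi_{ij}^+\mathbf{1}_{[0,\infty)}(\phi_{ij}(x))-\sum_j\psi_{ij}^-\mathbf{1}_{(-\varepsilon,\infty)}(\phi_{ij}(x))\ge\eta_i,\ i=1,\dots,I\}$. A local maximizer of a function $f$ on a set $X$ is a point $\bar x\in X$ for which there is a neighborhood $\mathcal{N}$ of $\bar x$ with $f(\bar x)\ge f(x)$ for all $x\in X\cap\mathcal{N}$.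 For $i=0,\dots,I$, $\mathcal{J}^-_{i,0}(\bar x)=\{j\in\{1,\dots,J_i\}:\psi_{ij}<0,\ \phi_{ij}(\bar x)=0\}$. The point $\bar x$ satisfies the local sign-invariance (LSI) condition if for every $i=0,1,\dots,I$ and every $j\in\mathcal{J}^-_{i,0}(\bar x)$, $\phi_{ij}$ is nonnegative on some neighborhood of $\bar x$. *)

From HB Require Import structures.
From mathcomp Require Import all_boot all_order all_algebra.
From mathcomp Require Import all_classical all_reals all_analysis.
Set Implicit Arguments. Unset Strict Implicit. Unset Printing Implicit Defensive.
Import Order.TTheory GRing.Theory Num.Theory.
Import numFieldNormedType.Exports.
Local Open Scope classical_set_scope.
Local Open Scope ring_scope.

Section Defs.
Variable R : realType.
Variable n : nat.

Definition dotv (a x : 'cV[R]_n) : R := (a^T *m x) 0 0.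

Definition pl_max (K : nat) (a : 'I_K.+1 -> 'cV[R]_n) (al : 'I_K.+1 -> R)
  (x : 'cV[R]_n) : R :=
  \big[Num.max/(dotv (a ord0) x + al ord0)]_(k < K.+1) (dotv (a k) x + al k).

Definition pl_min (L : nat) (b : 'I_L.+1 -> 'cV[R]_n) (be : 'I_L.+1 -> R)
  (x : 'cV[R]_n) : R :=
  \big[Num.min/(dotv (b ord0) x + be ord0)]_(l < L.+1) (dotv (b l) x + be l).

Definition ind_ge0 (t : R) : R := if 0 <= t then 1 else 0.
Definition ind_gtN (e t : R) : R := if - e < t then 1 else 0.

Definition posp (t : R) : R := Num.max t 0.
Definition negp (t : R) : R := Num.max (- t) 0.

(* Data: I constraints; index i : 'I_I.+1 with i = ord0 the objective,
   i = lift ord0 i' (i' : 'I_I) the constraint i'+1. *)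
Variable I : nat.
Variable J : 'I_I.+1 -> nat.
Variable psi : forall i : 'I_I.+1, 'I_(J i) -> R.
Variable phi : forall i : 'I_I.+1, 'I_(J i) -> 'cV[R]_n -> R.

Definition ci (i' : 'I_I) : 'I_I.+1 := lift ord0 i'.

Definition theta (c : 'cV[R]_n -> R) (x : 'cV[R]_n) : R :=
  c x + \sum_(j < J ord0) psi j * ind_ge0 (phi j x).

Definition X_AHS (P : set 'cV[R]_n) (A : 'M[R]_(I, n)) (eta : 'cV[R]_I)
  : set 'cV[R]_n :=
  [set x | P x /\ forall i' : 'I_I,
      eta i' 0 <= (A *m x) i' 0
                  + \sum_(j < J (ci i')) psi j * ind_ge0 (phi j x)].

Definition theta_eps (e : R) (c : 'cV[R]_n -> R) (x : 'cV[R]_n) : R :=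
  c x + \sum_(j < J ord0) posp (psi j) * ind_ge0 (phi j x)
      - \sum_(j < J ord0) negp (psi j) * ind_gtN e (phi j x).

Definition X_AHS_eps (e : R) (P : set 'cV[R]_n) (A : 'M[R]_(I, n))
  (eta : 'cV[R]_I) : set 'cV[R]_n :=
  [set x | P x /\ forall i' : 'I_I,
      eta i' 0 <= (A *m x) i' 0
                  + \sum_(j < J (ci i')) posp (psi j) * ind_ge0 (phi j x)
                  - \sum_(j < J (ci i')) negp (psi j) * ind_gtN e (phi j x)].

Definition Jminus0 (xbar : 'cV[R]_n) (i : 'I_I.+1) (j : 'I_(J i)) : Prop :=
  psi j < 0 /\ phi j xbar = 0.

Definition LSI (xbar : 'cV[R]_n) : Prop :=
  forall (i : 'I_I.+1) (j : 'I_(J i)), Jminus0 xbar j ->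
    exists N : set 'cV[R]_n, nbhs xbar N /\ (forall x, N x -> 0 <= phi j x).

End Defs.

Definition local_max (R : realType) (n : nat) (f : 'cV[R]_n -> R)
  (X : set 'cV[R]_n) (xbar : 'cV[R]_n) : Prop :=
  X xbar /\ exists N : set 'cV[R]_n, nbhs xbar N /\
     (forall x, X x -> N x -> (f x <= f xbar)%R).

Definition convex_in (R : realType) (n : nat) (P : set 'cV[R]_n) : Prop :=
  forall x y (t : R), (0 <= t)%R -> (t <= 1)%R -> P x -> P y ->
    P (t *: x + (1 - t) *: y)%R.

(* phi_ij(x) = max_k [(a_ij^k)^T x + alpha_ij^k] + min_l [(b_ij^l)^T x + beta_ij^l],
   with K_ij = (K i j).+1 >= 1 and L_ij = (L i j).+1 >= 1 pieces *)
Definition phiPL (R : realType) (n I : nat) (J : 'I_I.+1 -> nat)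
  (K L : forall i : 'I_I.+1, 'I_(J i) -> nat)
  (a : forall (i : 'I_I.+1) (j : 'I_(J i)), 'I_(K i j).+1 -> 'cV[R]_n)
  (alpha : forall (i : 'I_I.+1) (j : 'I_(J i)), 'I_(K i j).+1 -> R)
  (b : forall (i : 'I_I.+1) (j : 'I_(J i)), 'I_(L i j).+1 -> 'cV[R]_n)
  (beta : forall (i : 'I_I.+1) (j : 'I_(J i)), 'I_(L i j).+1 -> R)
  (i : 'I_I.+1) (j : 'I_(J i)) (x : 'cV[R]_n) : R :=
  (pl_max (a i j) (alpha i j) x + pl_min (b i j) (beta i j) x)%R.

From HB Require Import structures.
From mathcomp Require Import all_boot all_order all_algebra.
From mathcomp Require Import all_classical all_reals all_analysis.
From mathcomp Require Import lra.
Import Order.TTheory GRing.Theory Num.Theory.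
Import numFieldNormedType.Exports.
Local Open Scope classical_set_scope.
Local Open Scope ring_scope.

(* Since 1_[0,oo) <= 1_(-eps,oo), splitting psi = psi^+ - psi^- shows that
   theta^eps <= theta and X^eps_AHS is contained in X_AHS; the two problems
   coincide at every point where psi^- 1_(-eps,oo)(phi) = psi^- 1_[0,oo)(phi)
   for all (i, j).  The hypothesis on N gives this agreement at xbar (for
   j in J^-_{i,0}(xbar) it holds because phi_ij(xbar) = 0), hence (A); LSI
   extends it to a neighborhood of xbar, hence (B). *)

Section Indicators.
Context {R : realType}.

Lemma posp_sub_negp (t : R) : posp t - negp t = t.
Proof. by rewrite /posp /negp; have [|] := leP 0 t; have [|] := leP 0 (- t); lra. Qed.

Lemma negp_ge0 (t : R) : 0 <= negp t.
Proof. by rewrite /negp le_max lexx orbT. Qed.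

Lemma ind_ge0_le_gtN (e t : R) : 0 < e -> ind_ge0 t <= ind_gtN e t.
Proof.
move=> e_gt0; rewrite /ind_ge0 /ind_gtN; case: ifP => [t_ge0|_]; last by case: ifP.
by rewrite (lt_le_trans _ t_ge0) // oppr_lt0.
Qed.

Lemma ind_gtN_ge0 (e t : R) : 0 < e -> 0 <= t -> ind_gtN e t = ind_ge0 t.
Proof.
by move=> e_gt0 t_ge0; rewrite /ind_ge0 /ind_gtN t_ge0 (lt_le_trans _ t_ge0) // oppr_lt0.
Qed.

Lemma sumr_posp_negp_ind_le m (p f : 'I_m -> R) (e : R) : 0 < e ->
  \sum_(j < m) posp (p j) * ind_ge0 (f j) - \sum_(j < m) negp (p j) * ind_gtN e (f j)
  <= \sum_(j < m) p j * ind_ge0 (f j).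
Proof.
move=> e_gt0.
have -> : \sum_(j < m) p j * ind_ge0 (f j) =
    \sum_(j < m) posp (p j) * ind_ge0 (f j) - \sum_(j < m) negp (p j) * ind_ge0 (f j).
  by rewrite -sumrB; apply: eq_bigr => j _; rewrite -mulrBl posp_sub_negp.
rewrite lerD2l lerN2; apply: ler_sum => j _.
by rewrite ler_wpM2l ?negp_ge0 ?ind_ge0_le_gtN.
Qed.

Lemma sumr_posp_negp_ind_eq m (p f : 'I_m -> R) (e : R) :
  (forall j, negp (p j) * ind_gtN e (f j) = negp (p j) * ind_ge0 (f j)) ->
  \sum_(j < m) posp (p j) * ind_ge0 (f j) - \sum_(j < m) negp (p j) * ind_gtN e (f j)
  = \sum_(j < m) p j * ind_ge0 (f j).
Proof.
by move=> agree; rewrite -sumrB; apply: eq_bigr => j _; rewrite agree -mulrBl posp_sub_negp.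
Qed.

End Indicators.

Section LocalMax.
Context {R : realType} {n : nat}.
Implicit Types (f g : 'cV[R]_n -> R) (X Y : set 'cV[R]_n).

Lemma local_max_subset {f g X Y xbar} :
  Y `<=` X -> (forall x, Y x -> f x <= g x) -> f xbar = g xbar -> Y xbar ->
  local_max g X xbar -> local_max f Y xbar.
Proof.
move=> YX le_fg eq_fg Yxbar [_ [M [Mxbar gmax]]]; split => //.
exists M; split => // x Yx Mx.
by rewrite eq_fg (le_trans (le_fg x Yx)) // gmax //; exact: YX.
Qed.

Lemma local_max_near_eq {f g X Y xbar} :
  X xbar -> (\forall x \near xbar, (X x -> Y x) /\ f x = g x) ->
  local_max f Y xbar -> local_max g X xbar.
Proof.
move=> Xxbar near_eq [_ [M [Mxbar fmax]]]; split => //.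
have [_ eq_xbar] := nbhs_singleton near_eq.
exists (M `&` [set x | (X x -> Y x) /\ f x = g x]); split; first exact: filterI.
by move=> x Xx [Mx [XY <-]]; rewrite -eq_xbar fmax //; exact: XY.
Qed.

End LocalMax.

Section Relaxation.
Context {R : realType} {n I : nat} {J : 'I_I.+1 -> nat}.
Variables (psi : forall i : 'I_I.+1, 'I_(J i) -> R).
Variables (phi : forall i : 'I_I.+1, 'I_(J i) -> 'cV[R]_n -> R).
Variables (c : 'cV[R]_n -> R) (P : set 'cV[R]_n) (A : 'M[R]_(I, n)) (eta : 'cV[R]_I).

Definition ind_agree_at (e : R) (i : 'I_I.+1) (j : 'I_(J i)) (x : 'cV[R]_n) : Prop :=
  negp (psi i j) * ind_gtN e (phi i j x) = negp (psi i j) * ind_ge0 (phi i j x).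

Definition ind_agree (e : R) (x : 'cV[R]_n) : Prop :=
  forall i (j : 'I_(J i)), ind_agree_at e i j x.

Lemma theta_eps_le {e : R} {x} :
  0 < e -> theta_eps psi phi e c x <= theta psi phi c x.
Proof. by move=> e_gt0; rewrite /theta_eps /theta -addrA lerD2l sumr_posp_negp_ind_le. Qed.

Lemma X_AHS_eps_sub {e : R} :
  0 < e -> X_AHS_eps psi phi e P A eta `<=` X_AHS psi phi P A eta.
Proof.
move=> e_gt0 x [Px feas]; split => // i'; apply: le_trans (feas i') _.
by rewrite -addrA lerD2l sumr_posp_negp_ind_le.
Qed.

Lemma theta_eps_agree {e : R} {x} :
  ind_agree e x -> theta_eps psi phi e c x = theta psi phi c x.
Proof.
by move=> agree; rewrite /theta_eps /theta -addrA sumr_posp_negp_ind_eq // => j; exact: agree.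
Qed.

Lemma X_AHS_eps_agree {e : R} {x} :
  ind_agree e x -> X_AHS psi phi P A eta x -> X_AHS_eps psi phi e P A eta x.
Proof.
move=> agree [Px feas]; split => // i'.
by rewrite -addrA sumr_posp_negp_ind_eq // => j; exact: agree.
Qed.

Lemma Jminus0_ind_agree {e : R} {xbar i} {j : 'I_(J i)} :
  0 < e -> Jminus0 psi phi xbar j -> ind_agree_at e i j xbar.
Proof. by move=> e_gt0 [_ phi0]; rewrite /ind_agree_at ind_gtN_ge0 // phi0. Qed.

Lemma ind_agree_center {e : R} {xbar} {N : set 'cV[R]_n} :
  0 < e -> N xbar ->
  (forall i (j : 'I_(J i)), ~ Jminus0 psi phi xbar j -> forall x, N x -> ind_agree_at e i j x) ->
  ind_agree e xbar.
Proof.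
move=> e_gt0 Nxbar agreeN i j.
have [Jj|notJ] := pselect (Jminus0 psi phi xbar j).
  exact: Jminus0_ind_agree.
exact: agreeN.
Qed.

Lemma ind_agree_near {e : R} {xbar} {N : set 'cV[R]_n} :
  0 < e -> nbhs xbar N -> LSI psi phi xbar ->
  (forall i (j : 'I_(J i)), ~ Jminus0 psi phi xbar j -> forall x, N x -> ind_agree_at e i j x) ->
  \forall x \near xbar, ind_agree e x.
Proof.
move=> e_gt0 nbhsN lsi agreeN.
apply: (@filter_forall _ _ (fun i x => forall j, ind_agree_at e i j x) (nbhs xbar) _) => i.
apply: (@filter_forall _ _ (fun j x => ind_agree_at e i j x) (nbhs xbar) _) => j.
have [Jj|notJ] := pselect (Jminus0 psi phi xbar j); last first.
  by apply: filterS nbhsN; apply: agreeN.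
have [M [nbhsM phi_ge0]] := lsi i j Jj.
by apply: filterS nbhsM => x /phi_ge0 ?; rewrite /ind_agree_at ind_gtN_ge0.
Qed.

End Relaxation.

Theorem proposition3 (R : realType) (n : nat) (P : set 'cV[R]_n)
  (hPcl : closed P) (hPcv : convex_in P)
  (c : 'cV[R]_n -> R) (I : nat) (A : 'M[R]_(I, n)) (eta : 'cV[R]_I)
  (J : 'I_I.+1 -> nat) (psi : forall i : 'I_I.+1, 'I_(J i) -> R)
  (K L : forall i : 'I_I.+1, 'I_(J i) -> nat)
  (a : forall (i : 'I_I.+1) (j : 'I_(J i)), 'I_(K i j).+1 -> 'cV[R]_n)
  (alpha : forall (i : 'I_I.+1) (j : 'I_(J i)), 'I_(K i j).+1 -> R)
  (b : forall (i : 'I_I.+1) (j : 'I_(J i)), 'I_(L i j).+1 -> 'cV[R]_n)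
  (beta : forall (i : 'I_I.+1) (j : 'I_(J i)), 'I_(L i j).+1 -> R)
  (xbar : 'cV[R]_n) (epsbar : R) (N : set 'cV[R]_n) :
  let phi := phiPL a alpha b beta in
  X_AHS psi phi P A eta xbar ->
  0 < epsbar ->
  nbhs xbar N ->
  (forall (i : 'I_I.+1) (j : 'I_(J i)), ~ Jminus0 psi phi xbar j ->
     forall eps : R, 0 < eps -> eps <= epsbar ->
     forall x, N x ->
       negp (psi i j) * ind_gtN eps (phi i j x)
         = negp (psi i j) * ind_ge0 (phi i j x) /\
       negp (psi i j) * ind_ge0 (phi i j x)
         = negp (psi i j) * ind_ge0 (phi i j xbar)) ->
  (local_max (theta psi phi c) (X_AHS psi phi P A eta) xbar ->
     forall eps : R, 0 < eps -> eps <= epsbar ->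
       local_max (theta_eps psi phi eps c) (X_AHS_eps psi phi eps P A eta) xbar)
  /\
  (forall eps : R, 0 < eps -> eps <= epsbar ->
     local_max (theta_eps psi phi eps c) (X_AHS_eps psi phi eps P A eta) xbar ->
     LSI psi phi xbar ->
     local_max (theta psi phi c) (X_AHS psi phi P A eta) xbar).
Proof.
move=> phi Xxbar _ nbhsN hyp.
have agreeN e : 0 < e -> e <= epsbar -> forall i (j : 'I_(J i)),
    ~ Jminus0 psi phi xbar j -> forall x, N x -> ind_agree_at psi phi e i j x.
  by move=> e_gt0 e_le i j notJ x Nx; case: (hyp i j notJ e e_gt0 e_le x Nx).
have agree_xbar e : 0 < e -> e <= epsbar -> ind_agree psi phi e xbar.
  move=> e_gt0 e_le.
  exact: (ind_agree_center psi phi e_gt0 (nbhs_singleton nbhsN) (agreeN e e_gt0 e_le)).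
split=> [thetamax e e_gt0 e_le | e e_gt0 e_le epsmax lsi].
  have agree := agree_xbar e e_gt0 e_le.
  apply: (local_max_subset (X_AHS_eps_sub psi phi P A eta e_gt0) _
    (theta_eps_agree psi phi c agree) (X_AHS_eps_agree psi phi P A eta agree Xxbar) thetamax).
  by move=> x _; apply: theta_eps_le.
apply: (local_max_near_eq Xxbar _ epsmax).
apply: filterS (ind_agree_near psi phi e_gt0 nbhsN lsi (agreeN e e_gt0 e_le)) => x agree.
split; first exact: (X_AHS_eps_agree psi phi P A eta agree).
exact: (theta_eps_agree psi phi c agree).
Qed.
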